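(* Let $\alpha$ be an algebraic number of degree $3$ with conjugates $\alpha_1 = \alpha, \alpha_2, \alpha_3$. For a prime $q$, fix $q$-th roots $\alpha_1^{1/q},\alpha_2^{1/q},\alpha_3^{1/q}$ and a primitive $q$-th root of unity $\zeta_q$, let $K_q = \mathbb{Q}(\zeta_q, \alpha_1^{1/q}, \alpha_2^{1/q}, \alpha_3^{1/q})$, and let $C$ be the set of $\sigma \in \textup{Gal}(K_q/\mathbb{Q})$ such that: $\sigma(\zeta_q) = \zeta_q^{-1}$; there exist distinct $i,j \in \{1,2,3\}$ with $\sigma(\alpha_i) = \alpha_j$ and $\sigma(\alpha_j) = \alpha_i$; and for these $i,j$, $\sigma(\sigma(\alpha_i^{1/q})) = \alpha_i^{1/q}$ and $\sigma(\sigma(\alpha_j^{1/q})) = \alpha_j^{1/q}$. Then $|C| \ll q^2$. If moreover $|N(\alpha)| = 1$, then $|C| \ll q$.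
   Context: $N(\alpha)$ denotes the norm of $\alpha$ over $\mathbb{Q}$. The implied constants may depend on $\alpha$ but not on $q$. *)

From mathcomp Require Import all_boot all_algebra all_field.
Set Implicit Arguments. Unset Strict Implicit. Unset Printing Implicit Defensive.
Import GRing.Theory Num.Theory.
Local Open Scope ring_scope.

(* Elements of Gal(K_q/Q) are represented as restrictions to K_q of ring
   automorphisms of algC (every ring endomorphism of algC is an automorphism,
   and every element of Gal(K_q/Q) extends, K_q being normal over Q).
   Since K_q = Q(zeta, b_1, b_2, b_3), such a restriction is determined by
   (and determines) the tuple of images of the generators. *)

Definition in_C (z : algC) (a b : 'I_3 -> algC)
    (s : {rmorphism algC -> algC}) : Prop :=
  s z = z^-1 /\
  exists i j : 'I_3, [/\ i != j, s (a i) = a j, s (a j) = a i,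
                         s (s (b i)) = b i & s (s (b j)) = b j].

Definition gal_code (z : algC) (b : 'I_3 -> algC)
    (s : {rmorphism algC -> algC}) : algC * {ffun 'I_3 -> algC} :=
  (s z, [ffun i => s (b i)]).

Definition C_set (z : algC) (a b : 'I_3 -> algC)
    (t : algC * {ffun 'I_3 -> algC}) : Prop :=
  exists s : {rmorphism algC -> algC}, in_C z a b s /\ t = gal_code z b s.

From mathcomp Require Import all_boot all_algebra all_field.
From mathcomp Require Import zify ring.
Import GRing.Theory Num.Theory.
Local Open Scope ring_scope.

(* An element s of C inverts z and swaps a_i and a_j; since s^2 fixes b_i, the
   images s(b_i) = z^k b_j and s(b_j) = z^k b_i share one exponent k.  The
   remaining generator b_x goes to a q-th root z^r b_m of a conjugate a_m, so
   s is determined by O(1) indices and the two exponents k, r < q.  When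
   |N(a)| = 1, the norm is a real (indeed rational) number, so N(a) = +-1 and
   beta = b_1 b_2 b_3 satisfies beta^(2q) = 1; as s inverts roots of unity,
   s(beta) beta = +-1, which fixes s(b_x) = s(beta) / (s(b_i) s(b_j)) up to a
   sign, leaving only the exponent k free. *)

Lemma uniq_leq_card_codom {T : finType} {U : eqType} (f : T -> U) {s : seq U} :
  uniq s -> {subset s <= codom f} -> (size s <= #|T|)%N.
Proof. by move=> s_uniq s_f; rewrite -(size_codom f); exact: uniq_leq_size. Qed.

Lemma ord3_other (i j : 'I_3) : exists x : 'I_3, x != i /\ x != j.
Proof.
have [/existsP[x /andP[]]|] := boolP [exists x : 'I_3, (x != i) && (x != j)].
  by exists x.
rewrite negb_exists => /forallP no_x.
move: (no_x ord0) (no_x (inord 1)) (no_x ord_max).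
rewrite -!(inj_eq val_inj) /= inordK //; lia.
Qed.

Lemma ord3_other_uniq {i j x y : 'I_3} :
  i != j -> x != i -> x != j -> y != i -> y != j -> x = y.
Proof.
move=> ij xi xj yi yj; apply/val_inj.
move: ij xi xj yi yj (ltn_ord i) (ltn_ord j) (ltn_ord x) (ltn_ord y).
rewrite -!(inj_eq val_inj) /=; lia.
Qed.

Lemma big_ord3_prod {R : comPzRingType} (F : 'I_3 -> R) {i j x : 'I_3} :
  i != j -> x != i -> x != j -> \prod_y F y = F i * F j * F x.
Proof.
move=> ij xi xj.
rewrite (bigD1 i) //= (bigD1 j) 1?eq_sym //= (bigD1 x) /=; last by rewrite xi xj.
rewrite big1 ?mulr1 ?mulrA // => y /andP[/andP[yi yj] yx].
by rewrite (ord3_other_uniq ij yi yj xi xj) eqxx in yx.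
Qed.

Lemma prim_root_expr_eq (F : fieldType) (q : nat) (z y w : F) :
  q.-primitive_root z -> y ^+ q = w ^+ q -> exists k : 'I_q, y = z ^+ k * w.
Proof.
move=> z_prim yw; have q_gt0 := prim_order_gt0 z_prim.
have [w0|w_neq0] := eqVneq w 0.
  exists (Ordinal q_gt0); rewrite w0 mulr0; apply/eqP.
  have : y ^+ q == 0 by rewrite yw w0 expr0n gtn_eqF.
  by rewrite expf_eq0 q_gt0.
have yw_unity : (y / w) ^+ q = 1 by rewrite exprMn exprVn yw divff ?expf_neq0.
have [k yw_k] := prim_rootP z_prim yw_unity.
by exists k; rewrite -yw_k divfK.
Qed.

Lemma rmorph_root_perm {L : fieldType} {I : finType} {p : {poly rat}}
    {r : I -> L} :
  map_poly ratr p = \prod_i ('X - (r i)%:P) ->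
  forall (s : {rmorphism L -> L}) (m : I), exists m', s (r m) = r m'.
Proof.
move=> p_roots s m.
have s_p : map_poly s (map_poly ratr p) = map_poly ratr p.
  by rewrite -map_poly_comp; apply: eq_map_poly => c /=; rewrite fmorph_rat.
have : (map_poly ratr p).[s (r m)] = 0.
  rewrite -s_p horner_map p_roots horner_prod (bigD1 m) //=.
  by rewrite hornerXsubC subrr mul0r rmorph0.
rewrite p_roots horner_prod => /eqP/prodf_eq0[m' _].
by rewrite hornerXsubC subr_eq0 => /eqP ->; exists m'.
Qed.

Lemma prod_roots_real {I : finType} {p : {poly rat}} {r : I -> algC} :
  map_poly ratr p = \prod_i ('X - (r i)%:P) -> \prod_i r i \is Num.real.
Proof.
move=> p_roots.
have : \prod_i - r i = ratr p.[0].
  have <- : (map_poly ratr p).[ratr 0] = ratr p.[0] :> algC by apply: horner_map.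
  rewrite rmorph0 p_roots horner_prod.
  by apply: eq_bigr => i _; rewrite hornerXsubC sub0r.
rewrite prodrN => /(congr1 ( *%R ((-1) ^+ #|I|))); rewrite signrMK => ->.
by rewrite realM ?rpred_rat // rpredX ?realN.
Qed.

Lemma sqrf_eq1_sign (R : idomainType) (x : R) :
  x ^+ 2 = 1 -> exists e : bool, x = (-1) ^+ e.
Proof. by move/eqP; rewrite sqrf_eq1 => /orP[] /eqP->; [exists false | exists true]. Qed.

Section CodesOfC.

Variables (p : {poly rat}) (a : 'I_3 -> algC) (q : nat) (z : algC) (b : 'I_3 -> algC).
Hypotheses (p_roots : map_poly ratr p = \prod_(i < 3) ('X - (a i)%:P))
  (z_prim : q.-primitive_root z) (b_root : forall i, b i ^+ q = a i).

Let z_neq0 : z != 0.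
Proof. by rewrite (prim_root_eq0 z_prim) -lt0n (prim_order_gt0 z_prim). Qed.

Definition swap_code (i j : 'I_3) (k : 'I_q) (w : algC) :
    algC * {ffun 'I_3 -> algC} :=
  (z^-1, [ffun x => if x == i then z ^+ k * b j
                    else if x == j then z ^+ k * b i else w]).

Lemma rmorph_root_conj {s : {rmorphism algC -> algC}} {i j : 'I_3} :
  s (a i) = a j -> exists k : 'I_q, s (b i) = z ^+ k * b j.
Proof.
by move=> s_ai; apply: prim_root_expr_eq z_prim _; rewrite -rmorphXn !b_root.
Qed.

Lemma in_C_swap_code {s : {rmorphism algC -> algC}} :
  in_C z a b s -> exists i j (k : 'I_q),
    [/\ i != j, s (b i) = z ^+ k * b j, s (b j) = z ^+ k * b i &
      forall x, x != i -> x != j -> gal_code z b s = swap_code i j k (s (b x))].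
Proof.
move=> [s_z [i [j [ij s_ai _ ssbi _]]]].
have [k s_bi] := rmorph_root_conj s_ai.
have s_bj : s (b j) = z ^+ k * b i.
  by rewrite -ssbi s_bi rmorphM rmorphXn s_z exprVn mulVKf ?expf_neq0.
exists i, j, k; split=> // x xi xj.
rewrite /gal_code s_z; congr pair; apply/ffunP => y; rewrite !ffunE.
have [->|yi] := eqVneq y i => //; have [->|yj] := eqVneq y j => //.
by rewrite (ord3_other_uniq ij yi yj xi xj).
Qed.

Definition root_code (u : 'I_3 * 'I_3 * 'I_q * 'I_3 * 'I_q) :=
  let: (i, j, k, m, r) := u in swap_code i j k (z ^+ r * b m).

Lemma C_set_root_code t : C_set z a b t -> t \in codom root_code.
Proof.
move=> [s [s_C ->]].
have [i [j [k [ij _ _ s_code]]]] := in_C_swap_code s_C.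
have [x [xi xj]] := ord3_other i j.
have [m s_ax] := rmorph_root_perm p_roots s x.
have [r s_bx] := rmorph_root_conj s_ax.
by rewrite (s_code x xi xj) s_bx; apply/codomP; exists (i, j, k, m, r).
Qed.

Section UnitNorm.

Hypothesis norm1 : `|\prod_i a i| = 1.

Let beta := \prod_i b i.

Definition sign_code (u : 'I_3 * 'I_3 * 'I_q * bool) :=
  let: (i, j, k, e) := u in
  swap_code i j k ((-1) ^+ e / (beta * (z ^+ k * b j) * (z ^+ k * b i))).

Lemma beta_neq0 : beta != 0.
Proof.
apply/eqP => beta0; move: norm1.
rewrite -(eq_bigr _ (fun i _ => b_root i)) prodrXl -/beta beta0.
rewrite expr0n gtn_eqF ?(prim_order_gt0 z_prim) // normr0 => /eqP.
by rewrite eq_sym oner_eq0.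
Qed.

Lemma rmorph_beta_sign {s : {rmorphism algC -> algC}} :
  s z = z^-1 -> exists e : bool, s beta * beta = (-1) ^+ e.
Proof.
move=> s_z; apply: sqrf_eq1_sign.
have beta2_unity : (beta ^+ 2) ^+ q = 1.
  rewrite -exprM mulnC exprM -prodrXl (eq_bigr _ (fun i _ => b_root i)).
  by rewrite -real_normK ?norm1 ?expr1n // (prod_roots_real p_roots).
have [l beta2] := prim_rootP z_prim beta2_unity.
rewrite exprMn -rmorphXn beta2 rmorphXn s_z exprVn -beta2.
by rewrite mulVf // expf_neq0 // beta_neq0.
Qed.

Lemma C_set_sign_code t : C_set z a b t -> t \in codom sign_code.
Proof.
move=> [s [s_C ->]].
have [i [j [k [ij s_bi s_bj s_code]]]] := in_C_swap_code s_C.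
have [x [xi xj]] := ord3_other i j.
have [e s_beta] := rmorph_beta_sign s_C.1.
apply/codomP; exists (i, j, k, e); rewrite (s_code x xi xj) /=; congr swap_code.
have s_beta_prod : s beta = s (b i) * s (b j) * s (b x).
  by rewrite rmorph_prod (big_ord3_prod _ ij xi xj).
rewrite -s_bi -s_bj -s_beta s_beta_prod.
have b_neq0 m : b m != 0 by move/prodf_neq0: beta_neq0; apply.
by field; rewrite !fmorph_eq0 !b_neq0 beta_neq0.
Qed.

End UnitNorm.

End CodesOfC.

Arguments C_set_root_code {p a q z b}.
Arguments C_set_sign_code {p a q z b}.

Theorem lemma7p1 (p : {poly rat}) (a : 'I_3 -> algC)
  (p_irr : irreducible_poly p) (p_monic : p \is monic)
  (p_roots : map_poly ratr p = \prod_(i < 3) ('X - (a i)%:P)) :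
  (exists c : nat, forall q : nat, prime q ->
     forall (z : algC) (b : 'I_3 -> algC),
       q.-primitive_root z -> (forall i, b i ^+ q = a i) ->
       forall s : seq (algC * {ffun 'I_3 -> algC}),
         uniq s -> (forall t, t \in s -> C_set z a b t) ->
         (size s <= c * q ^ 2)%N)
  /\
  (`|\prod_(i < 3) a i| = 1 ->
   exists c : nat, forall q : nat, prime q ->
     forall (z : algC) (b : 'I_3 -> algC),
       q.-primitive_root z -> (forall i, b i ^+ q = a i) ->
       forall s : seq (algC * {ffun 'I_3 -> algC}),
         uniq s -> (forall t, t \in s -> C_set z a b t) ->
         (size s <= c * q)%N).
Proof.
split=> [|norm1].
  exists 27 => q _ z b z_prim b_root s s_uniq s_C.
  apply: leq_trans (uniq_leq_card_codom (root_code q z b) s_uniq _) _.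
    by move=> t /s_C; exact: C_set_root_code p_roots z_prim b_root t.
  by rewrite !card_prod !card_ord; lia.
exists 18 => q _ z b z_prim b_root s s_uniq s_C.
apply: leq_trans (uniq_leq_card_codom (sign_code q z b) s_uniq _) _.
  by move=> t /s_C; exact: C_set_sign_code p_roots z_prim b_root norm1 t.
by rewrite !card_prod !card_ord card_bool; lia.
Qed.
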